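(* Let $\rho$ be a left-c.e. semi-measure and let $\Phi$ be a Turing functional with $\lambda_\Phi=\rho$. Then for every $X\in\mathsf{W2R}\cap\mathrm{dom}(\Phi)$, $\Phi(X)\in\mathsf{W2R}_\rho$.
   Context: $2^{<\omega}$ is the set of finite binary strings, $\preceq$ the prefix order, $\varepsilon$ the empty string, $[\![\sigma]\!]=\{X\in2^\omega:\sigma\preceq X\}$, $[\![S]\!]=\bigcup_{\sigma\in S}[\![\sigma]\!]$; $\lambda$ is the uniform measure. $\mathsf{W2R}$ is the set of weakly 2-random sequences: $X$ such that $X\notin\bigcap_i\mathcal U_i$ for every uniformly effectively open sequence $(\mathcal U_i)$ of subsets of $2^\omega$ with $\lim_i\lambda(\mathcal U_i)=0$. A Turing functional $\Phi$ is a c.e. set of pairs $(\sigma,\tau)$ of strings such that whenever $(\sigma,\tau),(\sigma',\tau')\in\Phi$ and $\sigma\preceq\sigma'$, $\tau,\tau'$ are comparable; $\Phi^X$ is the maximal finite or infinite sequence extending every $\tau$ with $(\sigma,\tau)\in\Phi$ for some $\sigma\preceq X$; $\mathrm{dom}(\Phi)=\{X:\Phi^X\text{ infinite}\}$, $\Phi(X)=\Phi^X$ there, and $\lambda_\Phi(\sigma)=\lambda(\{X:\Phi^X\succeq\sigma\})$. A semi-measure is $\rho:2^{<\omega}\to[0,1]$ with $\rho(\varepsilon)=1$ and $\rho(\sigma)\ge\rho(\sigma0)+\rho(\sigma1)$; left-c.e. means uniformly approximable from below by computable non-decreasing rational sequences. For $E\subseteq2^{<\omega}$, $\rho(E)=\sum_{\sigma\in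 E}\rho(\sigma)$. A generalized $\rho$-Martin-Löf test is a uniformly c.e. sequence $(U_i)$ of subsets of $2^{<\omega}$ with $\lim_i\rho(U_i)=0$; $X\in\mathsf{W2R}_\rho$ iff $X\notin\bigcap_i[\![U_i]\!]$ for every such test. *)

From HB Require Import structures.
From mathcomp Require Import all_boot all_order all_algebra.
From mathcomp Require Import all_classical all_reals.
From mathcomp Require Import ereal topology normedtype sequences esum.
Set Implicit Arguments. Unset Strict Implicit. Unset Printing Implicit Defensive.
Import Order.TTheory GRing.Theory Num.Theory.
Import numFieldTopology.Exports numFieldNormedType.Exports.
Local Open Scope classical_set_scope.
Local Open Scope ring_scope.

Definition cpair (x y : nat) : nat := ((x + y) * (x + y).+1) %/ 2 + y.

Inductive code : Type :=
  | CZero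
  | CSucc
  | CId
  | CPi1
  | CPi2
  | CPair of code & code
  | CComp of code & code
  | CRec of code & code
  | CMu of code.

Inductive eval : code -> nat -> nat -> Prop :=
  | ev_zero n : eval CZero n 0
  | ev_succ n : eval CSucc n n.+1
  | ev_id n : eval CId n n
  | ev_pi1 a b : eval CPi1 (cpair a b) a
  | ev_pi2 a b : eval CPi2 (cpair a b) b
  | ev_pair f g n a b : eval f n a -> eval g n b -> eval (CPair f g) n (cpair a b)
  | ev_comp f g n m k : eval g n m -> eval f m k -> eval (CComp f g) n k
  | ev_rec0 f g x a : eval f x a -> eval (CRec f g) (cpair x 0) a
  | ev_recS f g x n a b : eval (CRec f g) (cpair x n) a ->
      eval g (cpair x (cpair n a)) b -> eval (CRec f g) (cpair x n.+1) b
  | ev_mu f x n : eval f (cpair x n) 0 ->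
      (forall m, (m < n)%N -> exists k, eval f (cpair x m) k.+1) ->
      eval (CMu f) x n.

Definition ce (T : countType) (A : set T) : Prop :=
  exists c : code, forall x : T, A x <-> exists m, eval c (pickle x) m.

Definition computable (T U : countType) (f : T -> U) : Prop :=
  exists c : code, forall x : T, eval c (pickle x) (pickle (f x)).

Notation str := (seq bool).
Notation cantor := (nat -> bool).

Definition prefixX (s : str) (X : cantor) : Prop :=
  forall i, (i < size s)%N -> X i = nth false s i.

Definition cyl (s : str) : set cantor := [set X | prefixX s X].
Definition cylS (S : set str) : set cantor := [set X | exists2 s, S s & prefixX s X].

(* On Borel (in particular open) sets this is the uniform measure. *)
Definition lambda (R : realType) (A : set cantor) : \bar R :=
  ereal_inf [set (esum S (fun s : str => ((2%:R : R) ^- size s)%:E)) |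
             S in [set S : set str | A `<=` cylS S]].

Definition turing_functional (Phi : set (str * str)) : Prop :=
  ce Phi /\
  forall s t s' t', Phi (s, t) -> Phi (s', t') -> prefix s s' ->
    prefix t t' || prefix t' t.

(* [outpref Phi X nu] : nu is a prefix of Phi^X, i.e. Phi^X extends nu.
   Phi^X is the union of the (pairwise comparable) t with (s,t) in Phi and
   s a prefix of X. *)
Definition outpref (Phi : set (str * str)) (X : cantor) (nu : str) : Prop :=
  nu = [::] \/ exists s t, [/\ Phi (s, t), prefixX s X & prefix nu t].

Definition in_dom (Phi : set (str * str)) (X : cantor) : Prop :=
  forall n, exists nu, size nu = n /\ outpref Phi X nu.

(* [Phi_val Phi X Y] : Phi(X) = Y, i.e. every prefix of Y is a prefix of Phi^X
   (for X in dom(Phi) this determines Y uniquely). *)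
Definition Phi_val (Phi : set (str * str)) (X Y : cantor) : Prop :=
  forall nu, prefixX nu Y -> outpref Phi X nu.

Definition lambda_Phi (R : realType) (Phi : set (str * str)) (s : str) : \bar R :=
  lambda R [set X | outpref Phi X s].

Definition semi_measure (R : realType) (rho : str -> R) : Prop :=
  [/\ forall s, 0 <= rho s <= 1,
      rho [::] = 1 &
      forall s, rho (rcons s false) + rho (rcons s true) <= rho s].

Definition left_ce (R : realType) (rho : str -> R) : Prop :=
  exists q : str * nat -> rat,
    [/\ computable q,
        forall s n, q (s, n) <= q (s, n.+1) &
        forall s, (fun n => (ratr (q (s, n)) : R)) @ \oo --> rho s].

Definition rho_set (R : realType) (rho : str -> R) (E : set str) : \bar R :=
  esum E (fun s => (rho s)%:E).

Definition unif_ce (W : nat -> set str) : Prop :=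
  ce [set p : nat * str | W p.1 p.2].

Definition unif_eff_open (U : nat -> set cantor) : Prop :=
  exists W : nat -> set str, unif_ce W /\ forall i, U i = cylS (W i).

Definition W2R (R : realType) (X : cantor) : Prop :=
  forall U : nat -> set cantor, unif_eff_open U ->
    (fun i => lambda R (U i)) @ \oo --> (0 : \bar R) ->
    ~ (forall i, U i X).

Definition W2R_rho (R : realType) (rho : str -> R) (Y : cantor) : Prop :=
  forall W : nat -> set str, unif_ce W ->
    (fun i => rho_set rho (W i)) @ \oo --> (0 : \bar R) ->
    ~ (forall i, cylS (W i) Y).

From Pilot Require Import Defs.
From HB Require Import structures.
From mathcomp Require Import all_boot all_order all_algebra.
From mathcomp Require Import all_classical all_reals.
From mathcomp Require Import ereal topology normedtype sequences esum.
From mathcomp Require Import zify.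

Set Implicit Arguments. Unset Strict Implicit. Unset Printing Implicit Defensive.
Import Order.TTheory GRing.Theory Num.Theory.
Import numFieldTopology.Exports numFieldNormedType.Exports.
Local Open Scope classical_set_scope.

(* Pull a generalized rho-test (W i) back along Phi: the strings s with Phi mapping
   [[s]] into [[W i]] form a uniformly c.e. family V, and [[V i]] covers the preimage
   of [[W i]], so by countable subadditivity lambda [[V i]] <= sum over t in W i of
   lambda_Phi(t) = rho(W i), which tends to 0. If Phi(X) = Y lay in every [[W i]],
   then X would lie in every [[V i]], contradicting weak 2-randomness of X.
   The enumeration of V searches for witnesses (i, s, t, t', fuel) with t in W i and
   (s, t') in Phi certified within the fuel; this needs halting within a given fuel
   to be a recursive predicate, i.e. a step-bounded universal evaluator for the
   mu-recursive codes, proved recursive by induction on codes. *)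

(** * Cantor pairing *)

Lemma half_triangleS s : (s.+1 * s.+2) %/ 2 = (s * s.+1) %/ 2 + s.+1.
Proof.
have -> : s.+1 * s.+2 = s * s.+1 + s.+1 * 2 by nia.
by rewrite divnDr ?dvdn_mull // mulnK.
Qed.

Lemma cpair_lt a b a' b' : a + b < a' + b' -> cpair a b < cpair a' b'.
Proof.
rewrite /cpair => lt_sum.
suff: (a + b) * (a + b).+1 %/ 2 + (a + b) < (a' + b') * (a' + b').+1 %/ 2 by lia.
elim: (a' + b') lt_sum => // s IHs.
by rewrite ltnS leq_eqVlt => /orP [/eqP ->|/IHs]; rewrite half_triangleS; lia.
Qed.

Lemma cpair_inj a b a' b' : cpair a b = cpair a' b' -> a = a' /\ b = b'.
Proof.
move=> eq_pair.
have eq_sum : a + b = a' + b'.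
  by case: (ltngtP (a + b) (a' + b')) => // /cpair_lt; rewrite eq_pair ltnn.
by move: eq_pair; rewrite /cpair eq_sum; lia.
Qed.

(* Walks the diagonals of the Cantor enumeration one step at a time. *)
Fixpoint unpair (n : nat) : nat * nat :=
  if n is n'.+1 then
    let p := unpair n' in if p.1 is a.+1 then (a, p.2.+1) else (p.2.+1, 0)
  else (0, 0).

Definition cfst n := (unpair n).1.
Definition csnd n := (unpair n).2.

Lemma cpair_unpair n : cpair (cfst n) (csnd n) = n.
Proof.
rewrite /cfst /csnd; elim: n => // n IHn /=.
case: (unpair n) IHn => [[|a] b] /= <-; rewrite /cpair.
  by rewrite !add0n !addn0 half_triangleS; lia.
by rewrite addSnnS addnS; lia.
Qed.

Lemma cfst_cpair a b : cfst (cpair a b) = a.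
Proof. by have /cpair_inj[] := cpair_unpair (cpair a b). Qed.

Lemma csnd_cpair a b : csnd (cpair a b) = b.
Proof. by have /cpair_inj[] := cpair_unpair (cpair a b). Qed.

Ltac simpl_cpair := repeat (rewrite cfst_cpair || rewrite csnd_cpair).

Ltac subst_cpair := repeat match goal with H : cpair _ _ = cpair _ _ |- _ =>
  let a := fresh in let b := fresh in case: (cpair_inj H) => a b; clear H; subst end.

Ltac merge_evals IH := match goal with
  H1 : Defs.eval ?f ?x ?a, H2 : Defs.eval ?f ?x ?b |- _ =>
    let E := fresh in have E := IH _ _ _ H1 H2; subst; clear H1 end.

Lemma eval_rec_functional f g :
    (forall x m m', Defs.eval f x m -> Defs.eval f x m' -> m = m') ->
    (forall x m m', Defs.eval g x m -> Defs.eval g x m' -> m = m') ->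
  forall x m m', Defs.eval (CRec f g) x m -> Defs.eval (CRec f g) x m' -> m = m'.
Proof.
move=> IHf IHg x; rewrite -(cpair_unpair x); move: (cfst x) (csnd x) => y k.
elim: k => [|k IHk] m m' ev ev';
  inversion ev; subst; inversion ev'; subst; subst_cpair => //.
  by merge_evals IHf.
repeat match goal with H : _.+1 = _.+1 |- _ => case: H => H; subst end.
match goal with H1 : Defs.eval (CRec f g) _ _, H2 : Defs.eval (CRec f g) _ _ |- _ =>
  have E := IHk _ _ H1 H2; subst end.
by merge_evals IHg.
Qed.

Lemma eval_mu_functional f :
    (forall x m m', Defs.eval f x m -> Defs.eval f x m' -> m = m') ->
  forall x m m', Defs.eval (CMu f) x m -> Defs.eval (CMu f) x m' -> m = m'.
Proof.
move=> IHf x m m' ev ev'.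
inversion ev as [| | | | | | | | | ? ? ? zero_m below_m]; subst.
inversion ev' as [| | | | | | | | | ? ? ? zero_m' below_m']; subst.
case: (ltngtP m m') => // lt_m.
  by case: (below_m' _ lt_m) => k /(IHf _ _ _ zero_m).
by case: (below_m _ lt_m) => k /(IHf _ _ _ zero_m').
Qed.

Lemma eval_functional c x m m' : Defs.eval c x m -> Defs.eval c x m' -> m = m'.
Proof.
elim: c x m m' => [||||| f IHf g IHg | f IHf g IHg | f IHf g IHg | f IHf] x m m'.
8: exact: eval_rec_functional.
8: exact: eval_mu_functional.
all: move=> ev ev'; inversion ev; subst; inversion ev'; subst; subst_cpair => //.
- by merge_evals IHf; merge_evals IHg.
- by merge_evals IHg; merge_evals IHf.
Qed.

(** * Total recursive functions *)

Definition recursive (F : nat -> nat) := exists c, forall x, Defs.eval c x (F x).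

Lemma recursive_ext F G : recursive F -> F =1 G -> recursive G.
Proof. by move=> [c evF] eqFG; exists c => x; rewrite -eqFG. Qed.

Lemma recursive_id : recursive id.
Proof. by exists CId => x; constructor. Qed.

Lemma recursive_comp F G : recursive F -> recursive G -> recursive (fun x => F (G x)).
Proof. by move=> [f evF] [g evG]; exists (CComp f g) => x; econstructor. Qed.

Lemma recursive_succ A : recursive A -> recursive (fun x => (A x).+1).
Proof. by apply: recursive_comp; exists CSucc => x; constructor. Qed.

Lemma recursive_const k : recursive (fun _ => k).
Proof.
elim: k => [|k IHk]; last exact: recursive_succ.
by exists CZero => x; constructor.
Qed.

Lemma recursive_cfst A : recursive A -> recursive (fun x => cfst (A x)).
Proof.
apply: recursive_comp; exists CPi1 => x.
by rewrite -{1}(cpair_unpair x); constructor.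
Qed.

Lemma recursive_csnd A : recursive A -> recursive (fun x => csnd (A x)).
Proof.
apply: recursive_comp; exists CPi2 => x.
by rewrite -{1}(cpair_unpair x); constructor.
Qed.

Lemma recursive_pair A B :
  recursive A -> recursive B -> recursive (fun x => cpair (A x) (B x)).
Proof. by move=> [a evA] [b evB]; exists (CPair a b) => x; constructor. Qed.

Fixpoint primrec (F G : nat -> nat) x k :=
  if k is k'.+1 then G (cpair x (cpair k' (primrec F G x k'))) else F x.

Lemma recursive_primrec F G A B : recursive F -> recursive G ->
  recursive A -> recursive B -> recursive (fun x => primrec F G (A x) (B x)).
Proof.
move=> [f evF] [g evG] recA recB.
have rec_unpair : recursive (fun n => primrec F G (cfst n) (csnd n)).
  exists (CRec f g) => n; rewrite -{1}(cpair_unpair n).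
  by elim: (csnd n) => [|k IHk] /=; [exact: ev_rec0 | exact: ev_recS IHk (evG _)].
apply: recursive_ext (recursive_comp rec_unpair (recursive_pair recA recB)) _.
by move=> x /=; simpl_cpair.
Qed.

(* In a step of [primrec], the argument [cpair x (cpair k v)] carries the previous
   value [v]. *)
Lemma recursive_prev : recursive (fun y => csnd (csnd y)).
Proof. exact/recursive_csnd/recursive_csnd/recursive_id. Qed.

Lemma recursive_iter N S I : recursive N -> recursive S -> recursive I ->
  recursive (fun x => iter (N x) S (I x)).
Proof.
move=> recN recS recI.
apply: recursive_ext
  (recursive_primrec recI (recursive_comp recS recursive_prev) recursive_id recN) _.
by move=> x; elim: (N x) => //= k ->; simpl_cpair.
Qed.

Lemma recursive_case C A B : recursive C -> recursive A -> recursive B ->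
  recursive (fun x => if C x is 0 then A x else B x).
Proof.
move=> recC recA recB.
apply: recursive_ext (recursive_primrec recA
  (recursive_comp recB (recursive_cfst recursive_id)) recursive_id recC) _.
by move=> x /=; case: (C x) => //= k; simpl_cpair.
Qed.

Lemma recursive_add A B : recursive A -> recursive B -> recursive (fun x => A x + B x).
Proof.
move=> recA recB.
apply: recursive_ext
  (recursive_primrec recursive_id (recursive_succ recursive_prev) recA recB) _.
by move=> x /=; elim: (B x) => [|k IHk] /=; simpl_cpair; rewrite ?addn0 ?IHk ?addnS.
Qed.

Lemma recursive_mul A B : recursive A -> recursive B -> recursive (fun x => A x * B x).
Proof.
move=> recA recB.
apply: recursive_ext (recursive_primrec (recursive_const 0)
  (recursive_add recursive_prev (recursive_cfst recursive_id)) recA recB) _.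
move=> x /=; elim: (B x) => [|k IHk] /=; first by rewrite muln0.
by simpl_cpair; rewrite IHk mulnS addnC.
Qed.

Lemma recursive_pred A : recursive A -> recursive (fun x => (A x).-1).
Proof.
move=> recA.
apply: recursive_ext (recursive_primrec (recursive_const 0)
  (recursive_cfst (recursive_csnd recursive_id)) (recursive_const 0) recA) _.
by move=> x /=; case: (A x) => //= k; simpl_cpair.
Qed.

Lemma recursive_sub A B : recursive A -> recursive B -> recursive (fun x => A x - B x).
Proof.
move=> recA recB.
apply: recursive_ext
  (recursive_primrec recursive_id (recursive_pred recursive_prev) recA recB) _.
by move=> x /=; elim: (B x) => [|k IHk] /=; simpl_cpair; rewrite ?subn0 ?IHk ?subnS.
Qed.

Lemma recursive_exp2 A : recursive A -> recursive (fun x => 2 ^ A x).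
Proof.
move=> recA.
apply: recursive_ext (recursive_primrec (recursive_const 1)
  (recursive_mul (recursive_const 2) recursive_prev) (recursive_const 0) recA) _.
by move=> x /=; elim: (A x) => [|k IHk] //=; simpl_cpair; rewrite IHk expnS.
Qed.

Definition recursiveb (P : nat -> bool) := recursive (fun x => nat_of_bool (P x)).

Lemma recursiveb_ext P Q : recursiveb P -> P =1 Q -> recursiveb Q.
Proof. by move=> recP eqPQ; apply: (recursive_ext recP) => x; rewrite eqPQ. Qed.

Lemma recursive_if P A B : recursiveb P -> recursive A -> recursive B ->
  recursive (fun x => if P x then A x else B x).
Proof.
move=> recP recA recB.
by apply: (recursive_ext (recursive_case recP recB recA)) => x; case: (P x).
Qed.

Lemma recursiveb_eq0 A : recursive A -> recursiveb (fun x => A x == 0).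
Proof.
move=> recA.
apply: (recursive_ext (recursive_case recA (recursive_const 1) (recursive_const 0))).
by move=> x; case: (A x).
Qed.

Lemma recursiveb_eq A B : recursive A -> recursive B -> recursiveb (fun x => A x == B x).
Proof.
move=> recA recB.
apply: recursiveb_ext
  (recursiveb_eq0 (recursive_add (recursive_sub recA recB) (recursive_sub recB recA))) _.
by move=> x; apply/idP/idP => /eqP eqAB; apply/eqP; lia.
Qed.

Lemma recursiveb_and P Q : recursiveb P -> recursiveb Q -> recursiveb (fun x => P x && Q x).
Proof.
move=> recP recQ.
by apply: (recursive_ext (recursive_if recP recQ (recursive_const 0))) => x; case: (P x).
Qed.

Lemma recursiveb_or P Q : recursiveb P -> recursiveb Q -> recursiveb (fun x => P x || Q x).
Proof.
move=> recP recQ.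
by apply: (recursive_ext (recursive_if recP (recursive_const 1) recQ)) => x; case: (P x).
Qed.

Lemma recursiveb_neg P : recursiveb P -> recursiveb (fun x => ~~ P x).
Proof.
move=> recP; apply: (recursive_ext
  (recursive_if recP (recursive_const 0) (recursive_const 1))) => x.
by case: (P x).
Qed.

Lemma recursiveb_neq0 A : recursive A -> recursiveb (fun x => A x != 0).
Proof. by move=> recA; apply/recursiveb_neg/recursiveb_eq0. Qed.

Lemma recursiveb_eqb P Q : recursiveb P -> recursiveb Q -> recursiveb (fun x => P x == Q x).
Proof.
move=> recP recQ; apply: (recursiveb_ext (recursiveb_eq recP recQ)) => x.
by case: (P x); case: (Q x).
Qed.

Lemma recursiveb_odd A : recursive A -> recursiveb (fun x => odd (A x)).
Proof.
move=> recA; apply: recursive_ext (recursive_primrec (recursive_const 0)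
  (recursive_case recursive_prev (recursive_const 1) (recursive_const 0))
  (recursive_const 0) recA) _.
by move=> x /=; elim: (A x) => [|k IHk] //=; simpl_cpair; rewrite IHk; case: (odd k).
Qed.

Lemma recursive_half A : recursive A -> recursive (fun x => (A x)./2).
Proof.
move=> recA; apply: recursive_ext (recursive_primrec (recursive_const 0)
  (recursive_add recursive_prev
    (recursiveb_odd (recursive_cfst (recursive_csnd recursive_id))))
  (recursive_const 0) recA) _.
move=> x /=; elim: (A x) => [|k IHk] //=; simpl_cpair.
rewrite IHk uphalfE -[in RHS](odd_double_half k).
by case: (odd k) => /=; lia.
Qed.

(** * Evaluation with bounded search *)

Fixpoint run_primrec (ra rb : nat -> option nat) y k :=
  if k is k'.+1 then obind (fun v => rb (cpair y (cpair k' v))) (run_primrec ra rb y k')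
  else ra y.

(* [mu_search ra x j] scans the values [ra (cpair x n)], [n < j]: it is [0] while
   all of them are defined and nonzero, [1] once one of them is undefined, and
   [n.+2] once [n] is found to be the least zero. *)
Fixpoint mu_search (ra : nat -> option nat) x j :=
  if j is j'.+1 then
    if mu_search ra x j' is 0 then
      match ra (cpair x j') with None => 1 | Some 0 => j'.+2 | Some _ => 0 end
    else mu_search ra x j'
  else 0.

Definition mu_result s := if s is n.+2 then Some n else None.

(* Evaluation with fuel [f], which only bounds the length of the searches of [CMu]. *)
Fixpoint run (f : nat) (c : Defs.code) (x : nat) {struct c} : option nat :=
  match c with
  | CZero => Some 0
  | CSucc => Some x.+1
  | CId => Some x
  | CPi1 => Some (cfst x)
  | CPi2 => Some (csnd x)
  | CPair a b => obind (fun va => omap (cpair va) (run f b x)) (run f a x)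
  | CComp a b => obind (run f a) (run f b x)
  | CRec a b => run_primrec (run f a) (run f b) (cfst x) (csnd x)
  | CMu a => mu_result (mu_search (run f a) x f)
  end.

Lemma mu_search_below ra x j :
  mu_search ra x j = 0 -> forall m, m < j -> exists k, ra (cpair x m) = Some k.+1.
Proof.
elim: j => // j IHj /=.
case search_j: (mu_search ra x j) => [|s] //.
case ra_j: (ra (cpair x j)) => [[|k]|] // _ m.
rewrite ltnS leq_eqVlt => /orP [/eqP ->|lt_mj]; first by exists k.
exact: IHj.
Qed.

Lemma mu_search_found ra x j n : mu_search ra x j = n.+2 ->
  ra (cpair x n) = Some 0 /\ forall m, m < n -> exists k, ra (cpair x m) = Some k.+1.
Proof.
elim: j => //= j IHj.
case search_j: (mu_search ra x j) => [|s]; last by rewrite -search_j => /IHj.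
case ra_j: (ra (cpair x j)) => [[|k]|] // [<-].
by split => //; exact: mu_search_below.
Qed.

Lemma mu_searchE ra x n : ra (cpair x n) = Some 0 ->
  (forall m, m < n -> exists k, ra (cpair x m) = Some k.+1) ->
  forall j, mu_search ra x j = if j <= n then 0 else n.+2.
Proof.
move=> zero_n nonzero_below; elim=> //= j ->.
case: (ltngtP j n) => [/nonzero_below [k ->] // | // | ->].
by rewrite zero_n.
Qed.

Lemma run_sound f c x m : run f c x = Some m -> Defs.eval c x m.
Proof.
elim: c x m => [||||| a IHa b IHb | a IHa b IHb | a IHa b IHb | a IHa] x m /=.
- by case=> <-; constructor.
- by case=> <-; constructor.
- by case=> <-; constructor.
- by case=> <-; rewrite -{1}(cpair_unpair x); constructor.
- by case=> <-; rewrite -{1}(cpair_unpair x); constructor.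
- case run_a: (run f a x) => [va|] //=; case run_b: (run f b x) => [vb|] //= [<-].
  by constructor; [exact: IHa | exact: IHb].
- case run_b: (run f b x) => [vb|] //= run_a.
  exact: ev_comp (IHb _ _ run_b) (IHa _ _ run_a).
- rewrite -{3}(cpair_unpair x); move: (cfst x) (csnd x) => y k.
  elim: k m => [|k IHk] m /=; first by move=> run_a; constructor; exact: IHa.
  case run_k: (run_primrec _ _ y k) => [v|] //= run_b.
  exact: ev_recS (IHk _ run_k) (IHb _ _ run_b).
- case search: (mu_search _ x f) => [|[|n]] //= [<-].
  have [zero_n nonzero_below] := mu_search_found search.
  constructor; first exact: IHa.
  by move=> m' /nonzero_below [k run_m']; exists k; apply: IHa.
Qed.

Section RunComplete.

Variables a b : Defs.code.
Hypothesis run_a : forall x m, Defs.eval a x m -> \forall f \near \oo, run f a x = Some m.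
Hypothesis run_b : forall x m, Defs.eval b x m -> \forall f \near \oo, run f b x = Some m.

Lemma run_primrec_complete y k m : Defs.eval (CRec a b) (cpair y k) m ->
  \forall f \near \oo, run_primrec (run f a) (run f b) y k = Some m.
Proof.
elim: k m => [|k IHk] m ev;
  inversion ev as [| | | | | | | ? ? ? ? ev_a | ? ? ? ? ? ? ev_k ev_b |]; subst;
  subst_cpair => //; first exact: run_a.
match goal with E : _.+1 = _.+1 |- _ => case: E => E; subst end.
by apply: filterS2 (IHk _ ev_k) (run_b ev_b) => f /= ->.
Qed.

Lemma run_mu_complete x m : Defs.eval (CMu a) x m ->
  \forall f \near \oo, run f (CMu a) x = Some m.
Proof.
move=> ev; inversion ev as [| | | | | | | | | ? ? ? zero_m below_m]; subst.
have nonzero_below : \forall f \near \oo,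
    forall m', m' < m -> exists k, run f a (cpair x m') = Some k.+1.
  elim: m {ev zero_m} below_m => [|n IHn] below_Sn; first exact: nearW.
  have [k /run_a run_n] := below_Sn n (ltnSn n).
  have below_n := IHn (fun m' lt_m'n => below_Sn m' (ltnW lt_m'n)).
  apply: filterS2 below_n run_n => f below run_n_f m'.
  by rewrite ltnS leq_eqVlt => /orP [/eqP ->|]; [exists k | exact: below].
apply: filterS3 (run_a zero_m) nonzero_below (nbhs_infty_gt m).
move=> f run_zero below lt_mf /=.
by rewrite (mu_searchE run_zero below) leqNgt lt_mf.
Qed.

End RunComplete.

Lemma run_complete c x m : Defs.eval c x m -> \forall f \near \oo, run f c x = Some m.
Proof.
elim: c x m => [||||| a IHa b IHb | a IHa b IHb | a IHa b IHb | a IHa] x m ev.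
- by inversion ev; apply: nearW.
- by inversion ev; apply: nearW.
- by inversion ev; apply: nearW.
- by inversion ev; subst; apply: nearW => f /=; rewrite cfst_cpair.
- by inversion ev; subst; apply: nearW => f /=; rewrite csnd_cpair.
- inversion ev as [| | | | | ? ? ? ? ? ev_a ev_b | | | |]; subst.
  by apply: filterS2 (IHa _ _ ev_a) (IHb _ _ ev_b) => f /= -> ->.
- inversion ev as [| | | | | | ? ? ? ? ? ev_b ev_a | | |]; subst.
  by apply: filterS2 (IHb _ _ ev_b) (IHa _ _ ev_a) => f /= -> /=.
- rewrite -(cpair_unpair x) in ev.
  exact: run_primrec_complete.
- exact: run_mu_complete.
Qed.

Definition oenc (o : option nat) := if o is Some v then v.+1 else 0.

(* [kleene c (cpair x f)] is nonzero iff [c] halts on [x] within fuel [f]. *)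
Definition kleene c p := oenc (run (csnd p) c (cfst p)).

Section KleeneRecursive.

Variables a b : Defs.code.
Hypothesis rec_a : recursive (kleene a).
Hypothesis rec_b : recursive (kleene b).

Lemma recursive_kleene_pair : recursive (kleene (CPair a b)).
Proof.
have rec_pair : recursive (fun p => if kleene a p == 0 then 0 else
    if kleene b p == 0 then 0 else (cpair (kleene a p).-1 (kleene b p).-1).+1).
  apply: recursive_if (recursiveb_eq0 rec_a) (recursive_const 0) _.
  apply: recursive_if (recursiveb_eq0 rec_b) (recursive_const 0) _.
  by apply/recursive_succ/recursive_pair; apply: recursive_pred.
apply: (recursive_ext rec_pair) => p; rewrite /kleene /=.
by case: (run _ a _) => //= va; case: (run _ b _).
Qed.

Lemma recursive_kleene_comp : recursive (kleene (CComp a b)).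
Proof.
have rec_comp : recursive (fun p => if kleene b p == 0 then 0 else
    kleene a (cpair (kleene b p).-1 (csnd p))).
  apply: recursive_if (recursiveb_eq0 rec_b) (recursive_const 0) _.
  apply: recursive_comp rec_a (recursive_pair (recursive_pred rec_b) _).
  exact: recursive_csnd recursive_id.
apply: (recursive_ext rec_comp) => p; rewrite /kleene /=.
by case: (run _ b _) => //= vb; simpl_cpair.
Qed.

(* One step of [run_primrec], on [r = cpair (cpair y f) (cpair k (oenc v))]. *)
Definition kleene_rec_step r := if csnd (csnd r) == 0 then 0 else
  kleene b (cpair (cpair (cfst (cfst r)) (cpair (cfst (csnd r)) (csnd (csnd r)).-1))
                  (csnd (cfst r))).

Lemma recursive_kleene_rec : recursive (kleene (CRec a b)).
Proof.
have rec_step : recursive kleene_rec_step.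
  have rec_r := recursive_id.
  apply: recursive_if (recursiveb_eq0 recursive_prev) (recursive_const 0) _.
  apply: recursive_comp rec_b (recursive_pair _ (recursive_csnd (recursive_cfst rec_r))).
  apply: recursive_pair (recursive_cfst (recursive_cfst rec_r)) _.
  apply: recursive_pair (recursive_cfst (recursive_csnd rec_r)) _.
  exact: recursive_pred recursive_prev.
have rec_y_f := recursive_pair (recursive_cfst (recursive_cfst recursive_id))
  (recursive_csnd recursive_id).
apply: recursive_ext (recursive_primrec rec_a rec_step rec_y_f
  (recursive_csnd (recursive_cfst recursive_id))) _ => p /=.
rewrite /kleene /=; move: (cfst (cfst p)) (csnd (cfst p)) (csnd p) => y k f.
elim: k => [|k IHk] /=; first by simpl_cpair.
rewrite {}IHk /kleene_rec_step; simpl_cpair.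
by case: (run_primrec _ _ y k) => //= v; rewrite /kleene; simpl_cpair.
Qed.

(* One step of [mu_search], on [r = cpair (cpair x f) (cpair j s)]: while the search
   state [s] is [0], the value [oenc (run f a (cpair x j))] is tested. *)
Definition kleene_mu_value r := kleene a (cpair (cpair (cfst (cfst r)) (cfst (csnd r)))
                                              (csnd (cfst r))).

Definition kleene_mu_step r :=
  if csnd (csnd r) == 0 then
    if kleene_mu_value r == 0 then 1
    else if kleene_mu_value r == 1 then (cfst (csnd r)).+2 else 0
  else csnd (csnd r).

Lemma recursive_kleene_mu : recursive (kleene (CMu a)).
Proof.
have rec_value : recursive kleene_mu_value.
  have rec_x := recursive_cfst (recursive_cfst recursive_id).
  have rec_j := recursive_cfst (recursive_csnd recursive_id).
  have rec_f := recursive_csnd (recursive_cfst recursive_id).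
  exact: recursive_comp rec_a (recursive_pair (recursive_pair rec_x rec_j) rec_f).
have rec_step : recursive kleene_mu_step.
  apply: recursive_if (recursiveb_eq0 recursive_prev) _ recursive_prev.
  apply: recursive_if (recursiveb_eq0 rec_value) (recursive_const 1) _.
  apply: recursive_if (recursiveb_eq rec_value (recursive_const 1)) _ (recursive_const 0).
  exact/recursive_succ/recursive_succ/recursive_cfst/recursive_csnd/recursive_id.
have rec_search := recursive_primrec (recursive_const 0) rec_step
  (recursive_pair (recursive_cfst recursive_id) (recursive_csnd recursive_id))
  (recursive_csnd recursive_id).
apply: (recursive_ext (recursive_pred rec_search)) => p /=.
rewrite /kleene /= (_ : forall s, oenc (mu_result s) = s.-1); last by case=> [|[|s]].
congr _.-1; move: (cfst p) (csnd p) => x f.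
suff eq_search j : primrec (fun=> 0) kleene_mu_step (cpair x f) j = mu_search (run f a) x j.
  exact: eq_search.
elim: j => //= j ->; rewrite /kleene_mu_step /kleene_mu_value /kleene; simpl_cpair.
by case: (mu_search _ x j) => //=; case: (run f a (cpair x j)) => [[|k]|].
Qed.

End KleeneRecursive.

Lemma recursive_kleene c : recursive (kleene c).
Proof.
elim: c => [||||| a IHa b IHb | a IHa b IHb | a IHa b IHb | a IHa].
- exact: recursive_const.
- exact/recursive_succ/recursive_succ/recursive_cfst/recursive_id.
- exact/recursive_succ/recursive_cfst/recursive_id.
- exact/recursive_succ/recursive_cfst/recursive_cfst/recursive_id.
- exact/recursive_succ/recursive_csnd/recursive_cfst/recursive_id.
- exact: recursive_kleene_pair.
- exact: recursive_kleene_comp.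
- exact: recursive_kleene_rec.
- exact: recursive_kleene_mu.
Qed.

Lemma ce_search (T : countType) (A : set T) (D : nat -> nat -> bool) :
  recursiveb (fun n => D (cfst n) (csnd n)) ->
  (forall x, A x <-> exists w, D (pickle x) w) -> ce A.
Proof.
move=> /recursiveb_neg [c evD] AE; exists (CMu c) => x; split.
- move=> /AE exD; case: (ex_minnP exD) => w Dw min_w; exists w; constructor.
    by have := evD (cpair (pickle x) w); simpl_cpair; rewrite Dw.
  move=> m lt_mw; exists 0; have := evD (cpair (pickle x) m); simpl_cpair.
  by case Dm: (D (pickle x) m) => //; have := min_w _ Dm; lia.
- case=> m ev; inversion ev as [| | | | | | | | | ? ? ? ev_m]; subst.
  have := eval_functional ev_m (evD _); simpl_cpair => Dm.
  by apply/AE; exists m; case: (D (pickle x) m) Dm.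
Qed.

Lemma kleene_eventually c n :
  (exists m, Defs.eval c n m) -> \forall f \near \oo, kleene c (cpair n f) != 0.
Proof.
move=> [m /run_complete]; apply: filterS => f run_f.
by rewrite /kleene; simpl_cpair; rewrite run_f.
Qed.

Lemma kleene_halts c n f : kleene c (cpair n f) != 0 -> exists m, Defs.eval c n m.
Proof.
rewrite /kleene; simpl_cpair.
by case run_f: (run f c n) => [m|] // _; exists m; exact: run_sound run_f.
Qed.

(** * Codes of pairs and strings *)

Definition pair_code a b := 2 ^ a * (2 ^ b).*2.+1.

Lemma pair_codeE a b : pair_code a b = CodeSeq.code [:: a; b].
Proof. by rewrite /pair_code /= muln1. Qed.

Lemma pair_code_inj a b a' b' : pair_code a b = pair_code a' b' -> a = a' /\ b = b'.
Proof.
by rewrite !pair_codeE => /(congr1 CodeSeq.decode); rewrite !CodeSeq.codeK => -[-> ->].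
Qed.

Lemma pickle_pair (T U : countType) (x : T) (y : U) :
  pickle (x, y) = pair_code (pickle x) (pickle y).
Proof. by rewrite pair_codeE. Qed.

Lemma recursive_pair_code A B :
  recursive A -> recursive B -> recursive (fun x => pair_code (A x) (B x)).
Proof.
move=> recA recB; apply: recursive_mul (recursive_exp2 recA) (recursive_succ _).
apply: (recursive_ext (recursive_mul (recursive_const 2) (recursive_exp2 recB))) => x.
by rewrite mul2n.
Qed.

Lemma pickle_cons (b : bool) (s : seq bool) :
  pickle (b :: s) = if b then (pickle s).*2.+1.*2 else (pickle s).*2.+1.
Proof.
have -> : pickle (b :: s) = 2 ^ b * (pickle s).*2.+1 by [].
by case: b; rewrite ?mul1n // expn1 mul2n.
Qed.

Lemma pickle_cons_neq0 (b : bool) (s : seq bool) : pickle (b :: s) != 0.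
Proof. by rewrite pickle_cons; case: b. Qed.

Lemma size_le_pickle (s : seq bool) : size s <= pickle s.
Proof. by elim: s => // b s IHs; rewrite pickle_cons /=; case: b; lia. Qed.

Definition code_head n := ~~ odd n.
Definition code_tail n := if odd n then n./2 else n./2./2.

(* Every nonzero code of a string is [(2 m).+1] or [2 (2 m).+1]. *)
Definition str_code_shape n := (n == 0) || odd n || odd n./2.

Lemma code_head_cons (b : bool) (s : seq bool) : code_head (pickle (b :: s)) = b.
Proof. by rewrite pickle_cons /code_head; case: b => /=; rewrite ?odd_double. Qed.

Lemma code_tail_cons (b : bool) (s : seq bool) : code_tail (pickle (b :: s)) = pickle s.
Proof.
by rewrite pickle_cons /code_tail; case: b; rewrite ?oddS odd_double /=; lia.
Qed.

Lemma str_code_shape_cons (b : bool) (s : seq bool) : str_code_shape (pickle (b :: s)).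
Proof.
rewrite pickle_cons /str_code_shape; case: b => /=; rewrite ?odd_double ?orbT //.
by rewrite doubleK /= odd_double.
Qed.

Lemma code_tail_lt n : n != 0 -> code_tail n < n.
Proof.
move=> n_neq0; rewrite /code_tail; case: ifP => _.
  by rewrite -{2}(odd_double_half n); lia.
by rewrite -{2}(odd_double_half n) -{2}(odd_double_half n./2); lia.
Qed.

Definition str_code_step q :=
  cpair (code_tail (cfst q)) ((csnd q != 0) && str_code_shape (cfst q)).

(* [n] steps suffice since [code_tail] strictly decreases. *)
Definition str_code n := csnd (iter n str_code_step (cpair n 1)) != 0.

Lemma str_code_stepE c ok : str_code_step (cpair c ok) =
  cpair (code_tail c) ((ok != 0) && str_code_shape c).
Proof. by rewrite /str_code_step; simpl_cpair. Qed.

Lemma str_code_pickle (s : seq bool) : str_code (pickle s).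
Proof.
suff ok_iter k : size s <= k -> csnd (iter k str_code_step (cpair (pickle s) 1)) != 0.
  exact/ok_iter/size_le_pickle.
elim: s k => [|b s IHs] k.
  by rewrite iter_fix ?csnd_cpair // str_code_stepE.
case: k => // k; rewrite ltnS => le_sk.
by rewrite iterSr str_code_stepE code_tail_cons str_code_shape_cons; exact: IHs.
Qed.

Lemma str_code_step_fail k c : csnd (iter k str_code_step (cpair c 0)) = 0.
Proof. by elim: k c => [|k IHk] c; rewrite ?iterSr ?str_code_stepE ?IHk ?csnd_cpair. Qed.

Lemma str_codeP n : str_code n -> exists s : seq bool, pickle s = n.
Proof.
suff ok_iter k : n <= k -> csnd (iter k str_code_step (cpair n 1)) != 0 ->
    exists s : seq bool, pickle s = n by exact: ok_iter.
elim: k n => [|k IHk] n le_nk.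
  by move: le_nk; rewrite leqn0 => /eqP ->; exists [::].
have [->|n_neq0] := eqVneq n 0; first by exists [::].
rewrite iterSr str_code_stepE.
case shape_n : (str_code_shape n); last first.
  by rewrite str_code_step_fail.
have /IHk ok_tail : code_tail n <= k by have := code_tail_lt n_neq0; lia.
move=> /ok_tail [s pickle_s]; exists (code_head n :: s).
rewrite pickle_cons pickle_s /code_head /code_tail.
move: shape_n; rewrite /str_code_shape (negbTE n_neq0) /=.
have E1 := odd_double_half n; have E2 := odd_double_half n./2.
case odd_n : (odd n) => /= shape_n; rewrite odd_n /= in E1 *; first lia.
by rewrite shape_n /= in E2; lia.
Qed.

(* Peels the heads off two codes simultaneously while they agree. *)
Definition prefix_code_step q :=
  if cfst q == 0 then q else
  cpair (code_tail (cfst q)) (cpair (code_tail (cfst (csnd q)))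
    [&& csnd (csnd q) != 0, cfst (csnd q) != 0
      & code_head (cfst q) == code_head (cfst (csnd q))]).

Definition prefix_code a b :=
  csnd (csnd (iter a prefix_code_step (cpair a (cpair b 1)))) != 0.

Lemma prefix_code_stepE a b ok : prefix_code_step (cpair a (cpair b ok)) =
  if a == 0 then cpair a (cpair b ok) else
  cpair (code_tail a)
    (cpair (code_tail b) [&& ok != 0, b != 0 & code_head a == code_head b]).
Proof. by rewrite /prefix_code_step; simpl_cpair. Qed.

Lemma prefix_code_pickle (s t : seq bool) : prefix_code (pickle s) (pickle t) = prefix s t.
Proof.
suff ok_iter k ok : size s <= k ->
    (csnd (csnd (iter k prefix_code_step (cpair (pickle s) (cpair (pickle t) ok)))) != 0)
    = (ok != 0) && prefix s t.
  by rewrite /prefix_code ok_iter ?size_le_pickle.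
elim: s t k ok => [|b s IHs] t k ok le_sk.
  by rewrite iter_fix ?prefix_code_stepE //; simpl_cpair; rewrite prefix0s andbT.
case: k le_sk => // k le_sk.
rewrite iterSr prefix_code_stepE (negbTE (pickle_cons_neq0 _ _)) code_tail_cons.
case: t => [|c t].
  have tail_nil : code_tail (pickle ([::] : seq bool)) = pickle ([::] : seq bool) by [].
  by rewrite tail_nil IHs //= andbF.
rewrite code_tail_cons IHs // !code_head_cons (negbTE (pickle_cons_neq0 _ _)) /=.
by case: (ok != 0); case: (b == c).
Qed.

Lemma recursive_code_tail A : recursive A -> recursive (fun x => code_tail (A x)).
Proof.
move=> recA; apply: recursive_if (recursiveb_odd recA) (recursive_half recA) _.
exact/recursive_half/recursive_half.
Qed.

Lemma recursiveb_code_head A : recursive A -> recursiveb (fun x => code_head (A x)).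
Proof. by move=> recA; apply/recursiveb_neg/recursiveb_odd. Qed.

Lemma recursiveb_str_code_shape A :
  recursive A -> recursiveb (fun x => str_code_shape (A x)).
Proof.
move=> recA; apply: recursiveb_or (recursiveb_odd (recursive_half recA)).
exact: recursiveb_or (recursiveb_eq0 recA) (recursiveb_odd recA).
Qed.

Lemma recursiveb_str_code A : recursive A -> recursiveb (fun x => str_code (A x)).
Proof.
move=> recA; apply/recursiveb_neq0/recursive_csnd/recursive_iter => //.
  apply: recursive_pair (recursive_code_tail (recursive_cfst recursive_id)) _.
  apply: recursiveb_and (recursiveb_neq0 (recursive_csnd recursive_id)) _.
  exact/recursiveb_str_code_shape/recursive_cfst/recursive_id.
exact: recursive_pair recA (recursive_const 1).
Qed.

Lemma recursiveb_prefix_code A B : recursive A -> recursive B ->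
  recursiveb (fun x => prefix_code (A x) (B x)).
Proof.
have rec_a := recursive_cfst recursive_id.
have rec_b := recursive_cfst (recursive_csnd recursive_id).
move=> recA recB; apply/recursiveb_neq0/recursive_csnd/recursive_csnd/recursive_iter => //.
  apply: recursive_if (recursiveb_eq0 rec_a) recursive_id _.
  apply: recursive_pair (recursive_code_tail rec_a) _.
  apply: recursive_pair (recursive_code_tail rec_b) _.
  apply: recursiveb_and (recursiveb_neq0 recursive_prev) _.
  apply: recursiveb_and (recursiveb_neq0 rec_b) _.
  exact: recursiveb_eqb (recursiveb_code_head rec_a) (recursiveb_code_head rec_b).
exact: recursive_pair recA (recursive_pair recB (recursive_const 1)).
Qed.

(** * The preimage of a test *)

(* The strings [s] such that [Phi] maps [[s]] into [[W i]]; their cylinders cover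
   the preimage of [[W i]] under [Phi]. *)
Definition preimage_test (W : nat -> set str) (Phi : set (str * str)) i s :=
  exists2 t, W i t & t = [::] \/ exists t', Phi (s, t') /\ prefix t t'.

(* A witness [w] codes [(i, s, t, t', f)]: [t] is enumerated into [W i] and
   [(s, t')] into [Phi] within fuel [f]. *)
Definition preimage_witness cW cPhi n w :=
  let i := cfst w in let s := cfst (csnd w) in let t := cfst (csnd (csnd w)) in
  let t' := cfst (csnd (csnd (csnd w))) in let f := csnd (csnd (csnd (csnd w))) in
  [&& n == pair_code i s, str_code t, str_code t',
      kleene cW (cpair (pair_code i t) f) != 0 &
      (t == 0) || (kleene cPhi (cpair (pair_code s t') f) != 0) && prefix_code t t'].

Lemma recursiveb_preimage_witness cW cPhi :
  recursiveb (fun n => preimage_witness cW cPhi (cfst n) (csnd n)).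
Proof.
have rec_w := recursive_csnd recursive_id.
have rec_i := recursive_cfst rec_w.
have rec_s := recursive_cfst (recursive_csnd rec_w).
have rec_t := recursive_cfst (recursive_csnd (recursive_csnd rec_w)).
have rec_t' := recursive_cfst (recursive_csnd (recursive_csnd (recursive_csnd rec_w))).
have rec_f := recursive_csnd (recursive_csnd (recursive_csnd (recursive_csnd rec_w))).
apply: recursiveb_and.
  exact: recursiveb_eq (recursive_cfst recursive_id) (recursive_pair_code rec_i rec_s).
apply: recursiveb_and (recursiveb_str_code rec_t) _.
apply: recursiveb_and (recursiveb_str_code rec_t') _.
apply: recursiveb_and.
  apply/recursiveb_neq0/(recursive_comp (recursive_kleene cW)).
  exact: recursive_pair (recursive_pair_code rec_i rec_t) rec_f.
apply: recursiveb_or (recursiveb_eq0 rec_t) _.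
apply: recursiveb_and _ (recursiveb_prefix_code rec_t rec_t').
apply/recursiveb_neq0/(recursive_comp (recursive_kleene cPhi)).
exact: recursive_pair (recursive_pair_code rec_s rec_t') rec_f.
Qed.

Lemma unif_ce_preimage_test W Phi : unif_ce W -> ce Phi -> unif_ce (preimage_test W Phi).
Proof.
move=> [cW WE] [cPhi PhiE].
apply: (ce_search (recursiveb_preimage_witness cW cPhi)) => -[i s] /=.
rewrite pickle_pair; split.
- move=> [t Wt t_Phi].
  have W_f : \forall f \near \oo, kleene cW (cpair (pair_code i (pickle t)) f) != 0.
    by apply/kleene_eventually; have := (WE (i, t)).1 Wt; rewrite pickle_pair.
  case: t_Phi => [t_nil|[t' [Phi_st' le_tt']]].
    have [f W_f'] := filter_ex W_f; subst t.
    exists (cpair i (cpair (pickle s) (cpair 0 (cpair 0 f)))).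
    rewrite /preimage_witness /=; simpl_cpair.
    by apply/and5P; split; [exact: eqxx | by [] | by [] | exact: W_f' | rewrite eqxx].
  have Phi_f : \forall f \near \oo,
      kleene cPhi (cpair (pair_code (pickle s) (pickle t')) f) != 0.
    by apply/kleene_eventually; have := (PhiE (s, t')).1 Phi_st'; rewrite pickle_pair.
  have [f [W_f' Phi_f']] := filter_ex (filterI W_f Phi_f).
  exists (cpair i (cpair (pickle s) (cpair (pickle t) (cpair (pickle t') f)))).
  rewrite /preimage_witness; simpl_cpair.
  by rewrite eqxx !str_code_pickle W_f' Phi_f' prefix_code_pickle le_tt' orbT.
- move=> [w]; rewrite /preimage_witness.
  move: (cfst w) (cfst (csnd w)) (cfst (csnd (csnd w))) => i' sc tc.
  move: (cfst (csnd (csnd (csnd w)))) (csnd (csnd (csnd (csnd w)))) => tc' f.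
  case/and5P => /eqP/pair_code_inj[<- <-] /str_codeP[t <-] /str_codeP[t' <-] W_f.
  move=> t_Phi; exists t.
    by apply/(WE (i, t)); rewrite pickle_pair; exact: kleene_halts W_f.
  case/orP: t_Phi => [/eqP t_nil|/andP[Phi_f le_tt']].
    by left; apply: (pcan_inj pickleK); rewrite t_nil.
  right; exists t'; split; last by rewrite -prefix_code_pickle.
  by apply/(PhiE (s, t')); rewrite pickle_pair; exact: kleene_halts Phi_f.
Qed.

(** * Outer measure *)

Local Open Scope ring_scope.
Local Open Scope ereal_scope.

Section OuterMeasure.
Variable R : realType.

Lemma esum_subset (T : choiceType) (A B : set T) (a : T -> \bar R) :
  A `<=` B -> (forall x, 0 <= a x) -> esum A a <= esum B a.
Proof.
move=> AB a_ge0; rewrite (esum_mkcond A) (esum_mkcond B); apply: le_esum => x _.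
case: ifP => [/set_mem/AB/mem_set ->|_] //.
by case: ifP.
Qed.

Lemma esum_bigcup_le (U : choiceType) (S : set str) (C : str -> set U) (a : U -> \bar R) :
  (forall x, 0 <= a x) ->
  esum (\bigcup_(t in S) C t) a <= esum S (fun t => esum (C t) a).
Proof.
move=> a_ge0.
have /choice[idx idxP] : forall x, exists t, (\bigcup_(t in S) C t) x -> S t /\ C t x.
  move=> x; case: (pselect ((\bigcup_(t in S) C t) x)) => [[t St Ctx]|not_in].
    by exists t.
  by exists [::] => /not_in.
rewrite esum_esum // -(esum_image _ (fun x => (idx x, x)) (fun k => a k.2)); last first.
  by move=> x y _ _ [].
by apply: esum_subset => // _ [x /idxP[Sx Cx] <-].
Qed.

Definition cyl_weight (s : str) : \bar R := ((2%:R : R) ^- size s)%:E.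

Lemma cyl_weight_ge0 s : 0 <= cyl_weight s.
Proof. by rewrite lee_fin invr_ge0 exprn_ge0. Qed.

Lemma lambda_ge0 A : 0 <= lambda R A.
Proof.
by apply: le_ereal_inf_tmp => _ [S _ <-]; apply: esum_ge0 => s _; exact: cyl_weight_ge0.
Qed.

Lemma lambda_le_esum A S : A `<=` cylS S -> lambda R A <= esum S cyl_weight.
Proof. by move=> AS; apply: ereal_inf_lbound; exists S. Qed.

Lemma lambda_le1 A : lambda R A <= 1.
Proof.
have -> : 1 = esum [set [::]] cyl_weight.
  by rewrite esum_set1 ?cyl_weight_ge0 // /cyl_weight /= expr0 invr1.
by apply: lambda_le_esum => X _; exists [::].
Qed.

Lemma lambda_fin_num A : lambda R A \is a fin_num.
Proof.
rewrite fin_numElt (lt_le_trans _ (lambda_ge0 A)) ?ltNye //.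
by rewrite (le_lt_trans (lambda_le1 A)) ?ltey.
Qed.

Lemma lambda_cover_approx A (e : R) : (0 < e)%R ->
  exists2 S, A `<=` cylS S & esum S cyl_weight <= lambda R A + e%:E.
Proof.
move=> e_gt0; case: (lb_ereal_inf_adherent e_gt0 (lambda_fin_num A)) => _ [S AS <-] lt_S.
by exists S => //; apply: ltW.
Qed.

(* Weights for the epsilon-of-room argument. *)
Definition geom_weight (e : R) (n : nat) : \bar R := (e / (2 ^ n.+1)%:R)%:E.

Lemma geom_weight_ge0 e n : (0 <= e)%R -> 0 <= geom_weight e n.
Proof. by move=> e_ge0; rewrite lee_fin divr_ge0. Qed.

Lemma esum_geom_weight_le (T : countType) (S : set T) e : (0 <= e)%R ->
  esum S (fun t => geom_weight e (pickle t)) <= e%:E.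
Proof.
move=> e_ge0.
have pickle_inj : set_inj S (@pickle T) by move=> x y _ _; apply: (pcan_inj pickleK).
rewrite -(esum_image _ _ (geom_weight e) pickle_inj).
have geom_ge0 n : 0 <= geom_weight e n by exact: geom_weight_ge0.
apply: (le_trans (esum_subset (B := setT) _ geom_ge0)) => //.
by rewrite -nneseries_esumT //; exact: epsilon_trick0.
Qed.

Lemma lambda_bigcup_le (S : set str) (A : str -> set cantor) (B : set cantor) :
  B `<=` \bigcup_(t in S) A t -> lambda R B <= esum S (fun t => lambda R (A t)).
Proof.
move=> B_sub; apply/lee_addgt0Pr => e e_gt0.
have /choice[C C_approx] : forall t, exists C,
    A t `<=` cylS C /\ esum C cyl_weight <= lambda R (A t) + geom_weight e (pickle t).
  move=> t; have [|C] := lambda_cover_approx (A t) (_ : 0 < e / (2 ^ (pickle t).+1)%:R)%R.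
    by rewrite divr_gt0 // ltr0n expn_gt0.
  by exists C.
apply: (le_trans (lambda_le_esum (S := \bigcup_(t in S) C t) _)).
  move=> X /B_sub [t St Atx]; have [/(_ X Atx) [s Cs prefix_s] _] := C_approx t.
  by exists s => //; exists t.
apply: (le_trans (esum_bigcup_le _ _ cyl_weight_ge0)).
apply: le_trans (le_esum (b := fun t => lambda R (A t) + geom_weight e (pickle t)) _) _.
  by move=> t _; case: (C_approx t).
rewrite esumD; last by move=> t _; apply/geom_weight_ge0/ltW.
  by rewrite leeD2l // esum_geom_weight_le // ltW.
by move=> t _; exact: lambda_ge0.
Qed.

End OuterMeasure.

Lemma lambda_preimage_test_le (R : realType) (rho : str -> R) W Phi i :
  (forall s, lambda_Phi R Phi s = (rho s)%:E) ->
  lambda R (cylS (preimage_test W Phi i)) <= rho_set rho (W i).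
Proof.
move=> lambda_PhiE.
have -> : rho_set rho (W i) = esum (W i) (lambda_Phi R Phi).
  by apply: eq_esum => t _; rewrite -lambda_PhiE.
apply: lambda_bigcup_le => X [s [t Wt t_Phi] prefix_s]; exists t => //.
case: t_Phi => [->|[t' [Phi_st' le_tt']]]; first by left.
by right; exists s, t'.
Qed.

Lemma cylS_preimage_test W Phi i X Y :
  Phi_val Phi X Y -> cylS (W i) Y -> cylS (preimage_test W Phi i) X.
Proof.
move=> PhiXY [t Wt /PhiXY [t_nil|[s [t' [Phi_st' prefix_s le_tt']]]]].
  by exists [::] => //; exists t => //; left.
by exists s => //; exists t => //; right; exists t'.
Qed.

Theorem theorem5p9 (R : realType) (rho : seq bool -> R)
  (Phi : set (seq bool * seq bool)) :
  semi_measure rho -> left_ce rho ->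
  turing_functional Phi ->
  (forall s, lambda_Phi R Phi s = (rho s)%:E) ->
  forall X : nat -> bool, W2R R X -> in_dom Phi X ->
  forall Y : nat -> bool, Phi_val Phi X Y -> W2R_rho rho Y.
Proof.
move=> _ _ [ce_Phi _] lambda_PhiE X W2R_X _ Y PhiXY W ce_W rho_W_cvg0 Y_in_W.
apply: (W2R_X (fun i => cylS (preimage_test W Phi i))).
- by exists (preimage_test W Phi); split => //; exact: unif_ce_preimage_test.
- apply: (@squeeze_cvge _ _ _ _ (fun=> 0) _ (fun i => rho_set rho (W i))); last 2 first.
  + exact: cvg_cst.
  + exact: rho_W_cvg0.
  by apply: nearW => i; rewrite lambda_ge0 lambda_preimage_test_le.
- by move=> i; exact: cylS_preimage_test PhiXY (Y_in_W i).
Qed.
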